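(* Let $f_1,f_2$ be strongly hyperbolic functions, $a_0>0$, $b_0,c_0\in\mathbb{R}$, $C=\overline{f_{a_0,b_0,c_0}}$ and $p=(\infty,c_0)$. Let $q\in\mathcal{P}$ with $q\notin C$ and $q$ not parallel to $p$. Then there exist $a_1>0$, $b_1,c_1\in\mathbb{R}$ such that $D=\overline{f_{a_1,b_1,c_1}}$ contains $p$ and $q$ and $C\cap D=\{p\}$.
   Context: Identify $\mathbb{S}^1$ with $\mathbb{R}\cup\{\infty\}$, $\mathcal{P}=\mathbb{S}^1\times\mathbb{S}^1$, $\mathbb{R}^+=(0,\infty)$. Two points of $\mathcal{P}$ are parallel if they have the same first coordinate or the same second coordinate. A function $f:\mathbb{R}^+\to\mathbb{R}^+$ is strongly hyperbolic if: (1) $\lim_{x\to0+}f(x)=+\infty$, $\lim_{x\to+\infty}f(x)=0$; (2) $f$ strictly convex; (3) $\lim_{x\to+\infty}f(x+b)/f(x)=1$ for each $b\in\mathbb{R}$; (4) $f$ differentiable; (5) $\ln|f'|$ strictly convex. For $a>0$, $b,c\in\mathbb{R}$: $f_{a,b,c}(x)=af_1(x+b)+c$ for $x>-b$, $f_{a,b,c}(x)=-af_2(-x-b)+c$ for $x<-b$; $\overline{f_{a,b,c}}=\{(x,f_{a,b,c}(x)):x\ne-b\}\cup\{(-b,\infty),(\infty,c)\}$. *)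

From Stdlib Require Import Reals.
Open Scope R_scope.

(* S^1 = R ∪ {∞}: [Some x] is the real x, [None] is ∞. *)
Definition S1 := option R.
Definition Pt := (S1 * S1)%type.

Definition parallel (p q : Pt) : Prop := fst p = fst q \/ snd p = snd q.

Definition strictly_convex_pos (g : R -> R) : Prop :=
  forall x y t, 0 < x -> 0 < y -> x <> y -> 0 < t < 1 ->
    g (t * x + (1 - t) * y) < t * g x + (1 - t) * g y.

(* f : R^+ -> R^+ is represented by a total function whose values on (0,∞) matter. *)
Definition strongly_hyperbolic (f : R -> R) : Prop :=
  (forall x, 0 < x -> 0 < f x) /\
  (forall M, exists d, 0 < d /\ forall x, 0 < x < d -> M < f x) /\
  (forall e, 0 < e -> exists N, forall x, N < x -> Rabs (f x) < e) /\
  strictly_convex_pos f /\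
  (forall b e, 0 < e -> exists N, forall x, N < x -> Rabs (f (x + b) / f x - 1) < e) /\
  (exists f' : R -> R,
     (forall x, 0 < x -> derivable_pt_lim f x (f' x)) /\
     strictly_convex_pos (fun x => ln (Rabs (f' x)))).

(* f_{a,b,c} built from f1, f2 (value at x = -b is irrelevant) *)
Definition fabc (f1 f2 : R -> R) (a b c : R) (x : R) : R :=
  if Rlt_dec (- b) x then a * f1 (x + b) + c else - a * f2 (- x - b) + c.

Definition curve (f1 f2 : R -> R) (a b c : R) (p : Pt) : Prop :=
  match p with
  | (Some x, Some y) => x <> - b /\ y = fabc f1 f2 a b c x
  | (Some x, None) => x = - b
  | (None, Some y) => y = c
  | (None, None) => False
  end.

From Stdlib Require Import Reals Lra.
Open Scope R_scope.

(* All curves through p = (∞, c) with the same a and c are the horizontal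
   translates of the single graph g := f_{a,0,c}, since f_{a,b,c}(x) = g(x + b).
   The function g is strictly decreasing on each of its two branches, with the
   right branch above c and the left one below, so g is injective on R \ {0}:
   two distinct translates meet only at p.  As f1 and f2 map (0,∞) onto itself,
   g takes every value except c, so every point not parallel to p lies on some
   translate.  Since q is not on C, the translate through q is another one. *)

Lemma convex_vanishing_decreasing (f : R -> R) :
  (forall x, 0 < x -> 0 < f x) ->
  (forall e, 0 < e -> exists N, forall x, N < x -> Rabs (f x) < e) ->
  strictly_convex_pos f ->
  forall x y, 0 < x -> x < y -> f y < f x.
Proof.
  intros Hpos Hlim Hcv x y Hx Hxy.
  destruct (Rlt_le_dec (f y) (f x)) as [Hlt | Hle]; [exact Hlt | exfalso].
  assert (Hfy : 0 < f y) by (apply Hpos; lra).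
  destruct (Hlim (f y) Hfy) as [N HN].
  set (z := Rmax N y + 1).
  assert (HNz : N < z) by (unfold z; pose proof (Rmax_l N y); lra).
  assert (Hyz : y < z) by (unfold z; pose proof (Rmax_r N y); lra).
  (* y is a convex combination of x and z, so f z >= f y once f y >= f x *)
  set (t := (z - y) / (z - x)).
  assert (Ht : 0 < t < 1).
  { assert (1 - t = (y - x) / (z - x)) by (unfold t; field; lra).
    pose proof (Rdiv_lt_0_compat (z - y) (z - x)).
    pose proof (Rdiv_lt_0_compat (y - x) (z - x)).
    unfold t in *; lra. }
  assert (Hy : t * x + (1 - t) * z = y) by (unfold t; field; lra).
  pose proof (Hcv x z t Hx ltac:(lra) ltac:(lra) Ht) as Hc.
  rewrite Hy in Hc.
  assert (Hfz : f y <= f z) by nra.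
  pose proof (HN z HNz); pose proof (Rle_abs (f z)); lra.
Qed.

Lemma continuous_blowup_vanishing_onto (f : R -> R) :
  (forall x, 0 < x -> continuity_pt f x) ->
  (forall M, exists d, 0 < d /\ forall x, 0 < x < d -> M < f x) ->
  (forall e, 0 < e -> exists N, forall x, N < x -> Rabs (f x) < e) ->
  forall v, 0 < v -> exists t, 0 < t /\ f t = v.
Proof.
  intros Hcont Hblow Hlim v Hv.
  destruct (Hblow v) as [d [Hd Hdv]].
  destruct (Hlim v Hv) as [N HN].
  set (w := Rmax N d + 1).
  assert (HNw : N < w) by (unfold w; pose proof (Rmax_l N d); lra).
  assert (Hdw : d < w) by (unfold w; pose proof (Rmax_r N d); lra).
  assert (Hfu : v < f (d / 2)) by (apply Hdv; lra).
  assert (Hfw : f w < v) by (pose proof (HN w HNw); pose proof (Rle_abs (f w)); lra).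
  destruct (Ranalysis5.IVT_interv (fun s => v - f s) (d / 2) w) as [s [Hs Hfs]].
  - intros s Hs. apply continuity_pt_minus.
    + apply continuity_pt_const. intros ? ?; reflexivity.
    + apply Hcont; lra.
  - lra.
  - simpl; lra.
  - simpl; lra.
  - exists s. simpl in Hfs. split; lra.
Qed.

Lemma strongly_hyperbolic_pos (f : R -> R) :
  strongly_hyperbolic f -> forall x, 0 < x -> 0 < f x.
Proof. intros [Hpos _]; exact Hpos. Qed.

Lemma strongly_hyperbolic_decreasing (f : R -> R) :
  strongly_hyperbolic f -> forall x y, 0 < x -> x < y -> f y < f x.
Proof.
  intros (Hpos & _ & Hlim & Hcv & _).
  exact (convex_vanishing_decreasing f Hpos Hlim Hcv).
Qed.

Lemma strongly_hyperbolic_onto (f : R -> R) :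
  strongly_hyperbolic f -> forall v, 0 < v -> exists t, 0 < t /\ f t = v.
Proof.
  intros (_ & Hblow & Hlim & _ & _ & f' & Hder & _).
  apply continuous_blowup_vanishing_onto; [| exact Hblow | exact Hlim].
  intros x Hx. apply derivable_continuous_pt. exists (f' x). exact (Hder x Hx).
Qed.

Section Translates.

Variables (f1 f2 : R -> R) (a c : R).
Hypotheses (Hf1 : strongly_hyperbolic f1) (Hf2 : strongly_hyperbolic f2) (Ha : 0 < a).

Lemma fabc_translate (b x : R) : fabc f1 f2 a b c x = fabc f1 f2 a 0 c (x + b).
Proof.
  unfold fabc. rewrite Rplus_0_r.
  replace (- (x + b) - 0) with (- x - b) by ring.
  destruct (Rlt_dec (- b) x), (Rlt_dec (- 0) (x + b)); try reflexivity; lra.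
Qed.

Lemma fabc0_neq (u v : R) : u <> 0 -> v <> 0 -> u < v ->
  fabc f1 f2 a 0 c u <> fabc f1 f2 a 0 c v.
Proof.
  intros Hu Hv Huv. unfold fabc.
  destruct (Rlt_dec (- 0) u), (Rlt_dec (- 0) v); try lra.
  - pose proof (strongly_hyperbolic_decreasing f1 Hf1 (u + 0) (v + 0)). nra.
  - pose proof (strongly_hyperbolic_pos f1 Hf1 (v + 0)).
    pose proof (strongly_hyperbolic_pos f2 Hf2 (- u - 0)). nra.
  - pose proof (strongly_hyperbolic_decreasing f2 Hf2 (- v - 0) (- u - 0)). nra.
Qed.

Lemma fabc0_inj (u v : R) : u <> 0 -> v <> 0 ->
  fabc f1 f2 a 0 c u = fabc f1 f2 a 0 c v -> u = v.
Proof.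
  intros Hu Hv E.
  destruct (Rtotal_order u v) as [Huv | [Huv | Hvu]]; [| exact Huv |].
  - exfalso; exact (fabc0_neq u v Hu Hv Huv E).
  - exfalso; exact (fabc0_neq v u Hv Hu Hvu (eq_sym E)).
Qed.

Lemma fabc0_onto (y : R) : y <> c -> exists u, u <> 0 /\ fabc f1 f2 a 0 c u = y.
Proof.
  intros Hy. unfold fabc.
  destruct (Rlt_le_dec c y).
  - destruct (strongly_hyperbolic_onto f1 Hf1 ((y - c) / a)) as [t [Ht Hft]].
    { apply Rdiv_lt_0_compat; lra. }
    exists t. split; [lra |].
    destruct (Rlt_dec (- 0) t); [| lra].
    rewrite Rplus_0_r, Hft. field; lra.
  - destruct (strongly_hyperbolic_onto f2 Hf2 ((c - y) / a)) as [t [Ht Hft]].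
    { apply Rdiv_lt_0_compat; lra. }
    exists (- t). split; [lra |].
    destruct (Rlt_dec (- 0) (- t)); [lra |].
    replace (- - t - 0) with t by ring. rewrite Hft. field; lra.
Qed.

Lemma curve_translates_meet (b0 b1 : R) : b0 <> b1 ->
  forall r : Pt, (curve f1 f2 a b0 c r /\ curve f1 f2 a b1 c r) <-> r = (None, Some c).
Proof.
  intros Hb r; split.
  - destruct r as [[x|] [y|]]; simpl; intros [C0 C1].
    + exfalso. destruct C0 as [Hx0 E0], C1 as [Hx1 E1]. apply Hb.
      rewrite fabc_translate in E0, E1.
      enough (x + b0 = x + b1) by lra.
      apply fabc0_inj; [lra | lra | congruence].
    + lra.
    + subst; reflexivity.
    + contradiction.
  - intros ->; simpl; auto.
Qed.

Lemma curve_translate_through (q : Pt) : ~ parallel q (None, Some c) ->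
  exists b, curve f1 f2 a b c q.
Proof.
  unfold parallel; simpl; intros Hq.
  destruct q as [[x|] [y|]]; simpl in Hq.
  - assert (Hy : y <> c) by (intros ->; auto).
    destruct (fabc0_onto y Hy) as [u [Hu Hfu]].
    exists (u - x); simpl. split; [lra |].
    rewrite fabc_translate. replace (x + (u - x)) with u by ring. auto.
  - exists (- x); simpl; ring.
  - exfalso; auto.
  - exfalso; auto.
Qed.

End Translates.

Theorem lemma4p11 (f1 f2 : R -> R) (a0 b0 c0 : R) (q : Pt) :
  strongly_hyperbolic f1 -> strongly_hyperbolic f2 -> 0 < a0 ->
  ~ curve f1 f2 a0 b0 c0 q ->
  ~ parallel q (None, Some c0) ->
  exists a1 b1 c1 : R, 0 < a1 /\
    curve f1 f2 a1 b1 c1 (None, Some c0) /\ curve f1 f2 a1 b1 c1 q /\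
    (forall r : Pt, (curve f1 f2 a0 b0 c0 r /\ curve f1 f2 a1 b1 c1 r) <-> r = (None, Some c0)).
Proof.
  intros Hf1 Hf2 Ha0 HqC Hq.
  destruct (curve_translate_through f1 f2 a0 c0 Hf1 Hf2 Ha0 q Hq) as [b1 HqD].
  assert (Hb : b0 <> b1) by (intros ->; contradiction).
  exists a0, b1, c0. split; [exact Ha0 |].
  split; [simpl; reflexivity |]. split; [exact HqD |].
  exact (curve_translates_meet f1 f2 a0 c0 Hf1 Hf2 Ha0 b0 b1 Hb).
Qed.
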